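(* Let $\rho \in \mathcal{S}$ and let $\sigma \in \mathcal{P}$ be non-zero. Then \[ D^{\mathbb{P}}(\rho\|\sigma)=\sup_{\omega > 0}\Big(\operatorname{tr}[\rho \log \omega] - \log \operatorname{tr}[\sigma \omega]\Big)=\sup_{\omega > 0}\Big( \operatorname{tr}[\rho \log \omega]+1-\operatorname{tr}[\sigma \omega]\Big), \] where the suprema are over positive definite operators $\omega$ on the $d$-dimensional Hilbert space (all three quantities equal $+\infty$ when the support of $\rho$ is not contained in the support of $\sigma$). Moreover, if $\rho>0$ and $\sigma>0$ (positive definite), both suprema are attained.
   Context: Work on a $d$-dimensional complex Hilbert space ($d\in\mathbb{N}$). $\mathcal{P}$ denotes the set of positive semidefinite operators and $\mathcal{S}\subset\mathcal{P}$ the density operators (unit trace). $\log$ is the natural logarithm. The projectively measured relative entropy is \[ D^{\mathbb{P}}(\rho\|\sigma) := \sup_{ \{ P_i \}_{i=1}^d} \sum_{i=1}^d \operatorname{tr} [P_i \rho] \log \frac{\operatorname{tr} [P_i \rho]}{\operatorname{tr} [P_i \sigma]}, \] the supremum over all families of $d$ mutually orthogonal (rank-one) projectors, with conventions $0\log\frac{0}{q}=0$ and $p\log\frac{p}{0}=+\infty$ for $p>0$. *)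

(* complex numbers as pairs of Stdlib reals, d x d complex
   matrices as functions nat -> nat -> C whose entries with indices < d
   are the only relevant ones. *)
From Stdlib Require Import Reals Arith.
Open Scope R_scope.

Definition C := (R * R)%type.
Definition C0 : C := (0, 0).
Definition C1 : C := (1, 0).
Definition RtoC (r : R) : C := (r, 0).
Definition Cadd (a b : C) : C := (fst a + fst b, snd a + snd b).
Definition Cmul (a b : C) : C :=
  (fst a * fst b - snd a * snd b, fst a * snd b + snd a * fst b).
Definition Cconj (a : C) : C := (fst a, - snd a).

Fixpoint csum (n : nat) (f : nat -> C) : C :=
  match n with
  | O => C0
  | S m => Cadd (csum m f) (f m)
  end.

Definition Vec := nat -> C.
Definition Mat := nat -> nat -> C.

Definition mmul (d : nat) (A B : Mat) : Mat :=
  fun i j => csum d (fun k => Cmul (A i k) (B k j)).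
Definition mapply (d : nat) (A : Mat) (x : Vec) : Vec :=
  fun i => csum d (fun j => Cmul (A i j) (x j)).
Definition inner (d : nat) (x y : Vec) : C :=
  csum d (fun i => Cmul (Cconj (x i)) (y i)).
Definition trace (d : nat) (A : Mat) : C := csum d (fun i => A i i).
Definition outer (x y : Vec) : Mat := fun i j => Cmul (x i) (Cconj (y j)).

Definition meq (d : nat) (A B : Mat) : Prop :=
  forall i j, (i < d)%nat -> (j < d)%nat -> A i j = B i j.

Definition hermitian (d : nat) (A : Mat) : Prop :=
  forall i j, (i < d)%nat -> (j < d)%nat -> A i j = Cconj (A j i).

Definition psd (d : nat) (A : Mat) : Prop :=
  hermitian d A /\ forall x : Vec, 0 <= fst (inner d x (mapply d A x)).

Definition nonzero_vec (d : nat) (x : Vec) : Prop :=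
  exists i, (i < d)%nat /\ x i <> C0.

Definition pd (d : nat) (A : Mat) : Prop :=
  hermitian d A /\
  forall x : Vec, nonzero_vec d x -> 0 < fst (inner d x (mapply d A x)).

Definition density (d : nat) (A : Mat) : Prop := psd d A /\ trace d A = C1.

Definition nonzero_mat (d : nat) (A : Mat) : Prop :=
  exists i j, (i < d)%nat /\ (j < d)%nat /\ A i j <> C0.

Definition rank1_proj (d : nat) (P : Mat) : Prop :=
  exists u : Vec, inner d u u = C1 /\ meq d P (outer u u).

Definition proj_family (d : nat) (P : nat -> Mat) : Prop :=
  (forall i, (i < d)%nat -> rank1_proj d (P i)) /\
  (forall i j, (i < d)%nat -> (j < d)%nat -> i <> j ->
     meq d (mmul d (P i) (P j)) (fun _ _ => C0)).

Inductive ER := Fin (r : R) | PInf | MInf.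

Definition Ele (x y : ER) : Prop :=
  match x, y with
  | MInf, _ => True
  | _, PInf => True
  | Fin a, Fin b => a <= b
  | _, _ => False
  end.

Definition Eadd (x y : ER) : ER :=
  match x, y with
  | Fin a, Fin b => Fin (a + b)
  | PInf, _ | _, PInf => PInf
  | _, _ => MInf
  end.

Fixpoint Esum (n : nat) (f : nat -> ER) : ER :=
  match n with
  | O => Fin 0
  | S m => Eadd (Esum m f) (f m)
  end.

Definition is_lub_E (S : ER -> Prop) (v : ER) : Prop :=
  (forall y, S y -> Ele y v) /\
  (forall z, (forall y, S y -> Ele y z) -> Ele v z).

Definition rel_term (p q : R) : ER :=
  if Req_EM_T p 0 then Fin 0
  else if Req_EM_T q 0 then PInf
  else Fin (p * ln (p / q)).

Definition meas_value (d : nat) (rho sigma : Mat) (P : nat -> Mat) : ER :=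
  Esum d (fun i => rel_term (fst (trace d (mmul d (P i) rho)))
                            (fst (trace d (mmul d (P i) sigma)))).

(* the set whose supremum is D^P(rho||sigma) *)
Definition DP_set (d : nat) (rho sigma : Mat) (v : ER) : Prop :=
  exists P, proj_family d P /\ v = meas_value d rho sigma P.

Definition orthonormal (d : nat) (u : nat -> Vec) : Prop :=
  forall i j, (i < d)%nat -> (j < d)%nat ->
    inner d (u i) (u j) = if Nat.eq_dec i j then C1 else C0.

Definition spectral_sum (d : nat) (u : nat -> Vec) (f : nat -> R) : Mat :=
  fun i j => csum d (fun k => Cmul (RtoC (f k)) (outer (u k) (u k) i j)).

Definition mat_log (d : nat) (w L : Mat) : Prop :=
  exists (u : nat -> Vec) (lam : nat -> R),
    orthonormal d u /\ (forall k, (k < d)%nat -> 0 < lam k) /\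
    meq d w (spectral_sum d u lam) /\
    meq d L (spectral_sum d u (fun k => ln (lam k))).

Definition var1 (d : nat) (rho sigma w L : Mat) : R :=
  fst (trace d (mmul d rho L)) - ln (fst (trace d (mmul d sigma w))).

Definition var2 (d : nat) (rho sigma w L : Mat) : R :=
  fst (trace d (mmul d rho L)) + 1 - fst (trace d (mmul d sigma w)).

Definition set1 (d : nat) (rho sigma : Mat) (v : ER) : Prop :=
  exists w L, pd d w /\ mat_log d w L /\ v = Fin (var1 d rho sigma w L).

Definition set2 (d : nat) (rho sigma : Mat) (v : ER) : Prop :=
  exists w L, pd d w /\ mat_log d w L /\ v = Fin (var2 d rho sigma w L).

(* supp rho ⊆ supp sigma, i.e. ker sigma ⊆ ker rho *)
Definition supp_incl (d : nat) (rho sigma : Mat) : Prop :=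
  forall x : Vec, (forall i, (i < d)%nat -> mapply d sigma x i = C0) ->
                  forall i, (i < d)%nat -> mapply d rho x i = C0.

(* For a fixed orthonormal basis the claim is classical: by Gibbs' inequality
   [ln x <= x - 1], [sum_k p_k ln l_k + 1 - sum_k l_k q_k] and
   [sum_k p_k ln l_k - ln (sum_k l_k q_k)] are at most [D(p||q)], with equality for
   [l = p / q], and approaching [D(p||q)] (or [+oo]) otherwise.  Every positive [w] is
   diagonal in some orthonormal basis, where both quantum expressions reduce to these
   classical ones for the measured distributions; and every basis arises from a
   rank-one projective measurement.  Hence all three suprema coincide.  A vector of
   [ker sigma] outside [ker rho] completed to a basis gives [+oo].  For positive
   definite [rho] and [sigma] the measured relative entropy is continuous on the
   compact set of orthonormal bases, so the supremum is attained at some basis, where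
   [w = sum_k (p_k / q_k) |u_k><u_k|] attains both expressions. *)

From Pilot Require Import Defs.
From Stdlib Require Import Reals Arith.
From mathcomp Require all_boot all_algebra Rstruct complex.
Open Scope R_scope.

Module OrthonormalCompleteness.
Import all_boot all_algebra Rstruct complex GRing.Theory.
Local Open Scope ring_scope.

Definition toC (a : Defs.C) : R[i] := Complex (fst a) (snd a).

Lemma toC_mul a b : toC (Cmul a b) = toC a * toC b.
Proof. by case: a => a1 a2; case: b => b1 b2. Qed.

Lemma toC_inj a b : toC a = toC b -> a = b.
Proof. by case: a => a1 a2; case: b => b1 b2 [-> ->]. Qed.

Lemma toC_csum n f : toC (csum n f) = \sum_(k < n) toC (f k).
Proof.
elim: n => [|n IH]; first by rewrite big_ord0.
by rewrite big_ord_recr /= -IH; case: (csum n f); case: (f n).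
Qed.

(* The columns [u k] form a unitary matrix [A]; its left inverse [B] is also a
   right inverse, which is the completeness relation. *)
Lemma orthonormal_complete (d : nat) (u : nat -> Vec) :
  Defs.orthonormal d u ->
  forall i j, (i < d)%coq_nat -> (j < d)%coq_nat ->
  csum d (fun k => Cmul (u k i) (Cconj (u k j))) =
  (match Nat.eq_dec i j with left _ => Defs.C1 | right _ => Defs.C0 end).
Proof.
move=> Hu i j /ltP Hi /ltP Hj.
pose A : 'M[R[i]]_d := \matrix_(a < d, k < d) toC (u k a).
pose B : 'M[R[i]]_d := \matrix_(k < d, a < d) toC (Cconj (u k a)).
have HBA : B *m A = 1%:M.
  apply/matrixP => k l; rewrite !mxE.
  under eq_bigr do rewrite !mxE -toC_mul.
  have := Hu k l (elimT ltP (ltn_ord k)) (elimT ltP (ltn_ord l)); rewrite /Defs.inner => Hkl.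
  rewrite -(toC_csum d (fun a => Cmul (Cconj (u k a)) (u l a))) Hkl.
  case: Nat.eq_dec => [/val_inj -> | Hne]; first by rewrite eqxx.
  have -> : (k == l) = false by apply/negbTE/eqP => E; apply: Hne; rewrite E.
  by [].
have := congr1 (fun M : 'M[R[i]]_d => M (Ordinal Hi) (Ordinal Hj)) (mulmx1C HBA).
rewrite /= !mxE; under eq_bigr do rewrite !mxE -toC_mul.
rewrite -(toC_csum d (fun k => Cmul (u k i) (Cconj (u k j)))) => H; apply: toC_inj; rewrite H.
case: Nat.eq_dec => [E | Hne].
  have -> : Ordinal Hi = Ordinal Hj by apply: val_inj; rewrite /= E.
  by rewrite eqxx.
have -> : (Ordinal Hi == Ordinal Hj) = false.
  by apply/negbTE/eqP => E; apply: Hne; have := congr1 val E.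
by [].
Qed.
End OrthonormalCompleteness.

From Stdlib Require Import Lra Lia Psatz Setoid Morphisms List ZArith.
From Stdlib Require Import Classical ClassicalEpsilon.
Import Defs OrthonormalCompleteness.
Open Scope R_scope.

Definition Copp (a : C) : C := (- fst a, - snd a).
Definition Csub (a b : C) : C := Cadd a (Copp b).

Lemma C_ext (a b : C) : fst a = fst b -> snd a = snd b -> a = b.
Proof. destruct a, b; simpl; intros -> ->; reflexivity. Qed.

Lemma C_ring_theory : ring_theory C0 C1 Cadd Cmul Csub Copp (@eq C).
Proof.
  constructor; intros; apply C_ext; unfold Cadd, Cmul, Csub, Copp, C0, C1; simpl; ring.
Qed.
Add Ring C_ring : C_ring_theory.

Lemma Cconj_add a b : Cconj (Cadd a b) = Cadd (Cconj a) (Cconj b).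
Proof. apply C_ext; unfold Cconj, Cadd; simpl; ring. Qed.
Lemma Cconj_mul a b : Cconj (Cmul a b) = Cmul (Cconj a) (Cconj b).
Proof. apply C_ext; unfold Cconj, Cmul; simpl; ring. Qed.
Lemma Cconj_opp a : Cconj (Copp a) = Copp (Cconj a).
Proof. apply C_ext; unfold Cconj, Copp; simpl; ring. Qed.
Lemma Cconj_invol a : Cconj (Cconj a) = a.
Proof. apply C_ext; unfold Cconj; simpl; ring. Qed.
Lemma Cconj_RtoC r : Cconj (RtoC r) = RtoC r.
Proof. apply C_ext; unfold Cconj, RtoC; simpl; ring. Qed.
Lemma Cconj_0 : Cconj C0 = C0.
Proof. apply C_ext; unfold Cconj, C0; simpl; ring. Qed.
Lemma Cconj_1 : Cconj C1 = C1.
Proof. apply C_ext; unfold Cconj, C1; simpl; ring. Qed.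
Lemma fst_RtoC_mul r a : fst (Cmul (RtoC r) a) = r * fst a.
Proof. unfold Cmul, RtoC; simpl; ring. Qed.
Lemma fst_conj_mul a : fst (Cmul (Cconj a) a) = fst a * fst a + snd a * snd a.
Proof. unfold Cmul, Cconj; simpl; ring. Qed.
Lemma snd_conj_mul a : snd (Cmul (Cconj a) a) = 0.
Proof. unfold Cmul, Cconj; simpl; ring. Qed.

Lemma normsq_pos (a : C) : a <> C0 -> 0 < fst (Cmul (Cconj a) a).
Proof.
  intros Ha. rewrite fst_conj_mul. destruct a as [a1 a2]; simpl.
  destruct (Req_dec a1 0), (Req_dec a2 0); [subst; now exfalso; apply Ha | nra..].
Qed.

Lemma Cmul_eq0 a b : Cmul a b = C0 -> a = C0 \/ b = C0.
Proof.
  intros H. destruct (classic (a = C0)) as [|Ha]; [now left|right].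
  destruct (classic (b = C0)) as [|Hb]; [assumption|exfalso].
  pose proof (normsq_pos _ Ha). pose proof (normsq_pos _ Hb).
  assert (E : fst (Cmul (Cconj (Cmul a b)) (Cmul a b))
              = fst (Cmul (Cconj a) a) * fst (Cmul (Cconj b) b)).
  { rewrite !fst_conj_mul. destruct a, b; simpl; ring. }
  rewrite H in E. replace (fst (Cmul (Cconj C0) C0)) with 0 in E by (simpl; ring). nra.
Qed.

Lemma csum_ext n f g : (forall i, (i < n)%nat -> f i = g i) -> csum n f = csum n g.
Proof.
  induction n; intros H; simpl; [reflexivity|].
  rewrite IHn by (intros; apply H; lia). rewrite H by lia. reflexivity.
Qed.

Lemma csum_add n f g : csum n (fun i => Cadd (f i) (g i)) = Cadd (csum n f) (csum n g).
Proof. induction n; simpl. apply C_ext; simpl; ring. rewrite IHn; ring. Qed.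

Lemma csum_mull n c f : csum n (fun i => Cmul c (f i)) = Cmul c (csum n f).
Proof. induction n; simpl. apply C_ext; unfold Cmul; simpl; ring. rewrite IHn; ring. Qed.

Lemma csum_mulr n c f : csum n (fun i => Cmul (f i) c) = Cmul (csum n f) c.
Proof. induction n; simpl. apply C_ext; unfold Cmul; simpl; ring. rewrite IHn; ring. Qed.

Lemma csum_zero n f : (forall i, (i < n)%nat -> f i = C0) -> csum n f = C0.
Proof.
  intros H. induction n; simpl; [reflexivity|].
  rewrite IHn, H by (intros; try apply H; lia). ring.
Qed.

Lemma csum_swap n m (f : nat -> nat -> C) :
  csum n (fun i => csum m (fun j => f i j)) = csum m (fun j => csum n (fun i => f i j)).
Proof.
  induction n; simpl.
  - symmetry; apply csum_zero; reflexivity.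
  - rewrite IHn, <- csum_add. reflexivity.
Qed.

Lemma csum_conj n f : Cconj (csum n f) = csum n (fun i => Cconj (f i)).
Proof. induction n; simpl. apply Cconj_0. rewrite Cconj_add, IHn; reflexivity. Qed.

Definition kron (i j : nat) : C := if Nat.eq_dec i j then C1 else C0.

Lemma Cconj_kron i j : Cconj (kron i j) = kron i j.
Proof. unfold kron; destruct Nat.eq_dec; [apply Cconj_1|apply Cconj_0]. Qed.

Lemma kron_sym i j : kron i j = kron j i.
Proof. unfold kron; do 2 destruct Nat.eq_dec; congruence. Qed.

Lemma csum_kron n j f : (j < n)%nat -> csum n (fun i => Cmul (kron i j) (f i)) = f j.
Proof.
  induction n; intros Hj; [lia|]. simpl. unfold kron at 2.
  destruct (Nat.eq_dec n j) as [<-|E].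
  - rewrite csum_zero; [ring|]. intros i Hi. unfold kron; destruct Nat.eq_dec; [lia|ring].
  - rewrite IHn by lia. ring.
Qed.

Lemma csum_kron_l n j f : (j < n)%nat -> csum n (fun i => Cmul (kron j i) (f i)) = f j.
Proof.
  intros Hj. rewrite <- (csum_kron n j f Hj). apply csum_ext; intros; now rewrite kron_sym.
Qed.

Fixpoint rsum (n : nat) (f : nat -> R) : R :=
  match n with O => 0 | S m => rsum m f + f m end.

Lemma fst_csum n f : fst (csum n f) = rsum n (fun i => fst (f i)).
Proof. induction n; simpl; [reflexivity|]. rewrite IHn; reflexivity. Qed.
Lemma snd_csum n f : snd (csum n f) = rsum n (fun i => snd (f i)).
Proof. induction n; simpl; [reflexivity|]. rewrite IHn; reflexivity. Qed.

Lemma rsum_ext n f g : (forall i, (i < n)%nat -> f i = g i) -> rsum n f = rsum n g.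
Proof.
  induction n; intros H; simpl; [reflexivity|].
  rewrite IHn by (intros; apply H; lia). rewrite H by lia. reflexivity.
Qed.
Lemma rsum_add n f g : rsum n (fun i => f i + g i) = rsum n f + rsum n g.
Proof. induction n; simpl. ring. rewrite IHn; ring. Qed.
Lemma rsum_sub n f g : rsum n (fun i => f i - g i) = rsum n f - rsum n g.
Proof. induction n; simpl. ring. rewrite IHn; ring. Qed.
Lemma rsum_scal n c f : rsum n (fun i => c * f i) = c * rsum n f.
Proof. induction n; simpl. ring. rewrite IHn; ring. Qed.
Lemma rsum_zero n f : (forall i, (i < n)%nat -> f i = 0) -> rsum n f = 0.
Proof.
  intros H. induction n; simpl; [reflexivity|].
  rewrite IHn, H by (intros; try apply H; lia). ring.
Qed.
Lemma rsum_nonneg n f : (forall i, (i < n)%nat -> 0 <= f i) -> 0 <= rsum n f.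
Proof.
  induction n; intros H; simpl; [lra|].
  assert (0 <= rsum n f) by (apply IHn; intros; apply H; lia).
  assert (0 <= f n) by (apply H; lia). lra.
Qed.
Lemma rsum_ge_term n f i : (forall k, (k < n)%nat -> 0 <= f k) -> (i < n)%nat ->
  f i <= rsum n f.
Proof.
  induction n; intros H Hi; [lia|]. simpl.
  assert (0 <= rsum n f) by (apply rsum_nonneg; intros; apply H; lia).
  assert (0 <= f n) by (apply H; lia).
  destruct (Nat.eq_dec i n) as [->|]; [lra|].
  assert (f i <= rsum n f) by (apply IHn; auto; try lia; intros; apply H; lia). lra.
Qed.
Lemma rsum_single n k c : (k < n)%nat ->
  rsum n (fun i => if Nat.eq_dec i k then c else 0) = c.
Proof.
  induction n; intros Hk; [lia|]. simpl.
  destruct (Nat.eq_dec n k) as [->|].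
  - rewrite rsum_zero; [ring|]. intros; destruct Nat.eq_dec; [lia|reflexivity].
  - rewrite IHn by lia. ring.
Qed.

#[local] Instance csum_proper n : Proper (pointwise_relation nat eq ==> eq) (csum n).
Proof. intros f g H. apply csum_ext; intros; apply H. Qed.

Ltac pull_csum := repeat first [setoid_rewrite <- csum_mull | setoid_rewrite <- csum_mulr].
Ltac csum_congr := repeat (apply csum_ext; intros).

Lemma trace_outer d u A : trace d (mmul d (outer u u) A) = inner d u (mapply d A u).
Proof.
  unfold trace, mmul, outer, inner, mapply. pull_csum.
  rewrite csum_swap. csum_congr. ring.
Qed.

Lemma trace_spectral d A u f :
  trace d (mmul d A (spectral_sum d u f)) =
  csum d (fun k => Cmul (RtoC (f k)) (inner d (u k) (mapply d A (u k)))).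
Proof.
  unfold trace, mmul, spectral_sum, outer, inner, mapply. pull_csum.
  setoid_rewrite csum_swap at 2. rewrite csum_swap. csum_congr. ring.
Qed.

Lemma trace_meq_l d A A' B : meq d A A' -> trace d (mmul d A B) = trace d (mmul d A' B).
Proof. intros H. unfold trace, mmul. csum_congr. rewrite H by auto. reflexivity. Qed.

Lemma trace_meq_r d A B B' : meq d B B' -> trace d (mmul d A B) = trace d (mmul d A B').
Proof. intros H. unfold trace, mmul. csum_congr. rewrite H by auto. reflexivity. Qed.

Lemma meq_refl d A : meq d A A.
Proof. intros ? ? ? ?; reflexivity. Qed.

Section OrthonormalBasis.
Variables (d : nat) (u : nat -> Vec).
Hypothesis Hu : orthonormal d u.

Lemma orthonormal_kron i j : (i < d)%nat -> (j < d)%nat ->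
  csum d (fun k => Cmul (u k i) (Cconj (u k j))) = kron i j.
Proof. intros; apply orthonormal_complete; auto. Qed.

Lemma orthonormal_unit k : (k < d)%nat -> inner d (u k) (u k) = C1.
Proof. intros Hk. rewrite Hu by auto. destruct Nat.eq_dec; [reflexivity|lia]. Qed.

Lemma basis_expand x i : (i < d)%nat ->
  x i = csum d (fun k => Cmul (u k i) (inner d (u k) x)).
Proof.
  intros Hi.
  transitivity (csum d (fun j => Cmul (csum d (fun k => Cmul (u k i) (Cconj (u k j)))) (x j))).
  - rewrite (csum_ext d _ (fun j => Cmul (kron i j) (x j))).
    + symmetry; apply csum_kron_l; auto.
    + intros j Hj; rewrite orthonormal_kron; auto.
  - unfold inner. pull_csum. rewrite csum_swap. csum_congr. ring.
Qed.

Lemma basis_coeff_nonzero x i : (i < d)%nat -> x i <> C0 ->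
  exists k, (k < d)%nat /\ inner d (u k) x <> C0.
Proof.
  intros Hi Hx. apply NNPP; intros Hn. apply Hx.
  rewrite (basis_expand x i Hi). apply csum_zero; intros k Hk.
  destruct (classic (inner d (u k) x = C0)) as [E|E]; [rewrite E; ring|].
  exfalso; apply Hn; eauto.
Qed.

Lemma trace_basis_sum A :
  csum d (fun k => inner d (u k) (mapply d A (u k))) = trace d A.
Proof.
  unfold trace.
  transitivity (csum d (fun i => csum d (fun j => Cmul (A i j)
     (csum d (fun k => Cmul (u k j) (Cconj (u k i))))))).
  - unfold inner, mapply. pull_csum. rewrite csum_swap. apply csum_ext; intros.
    rewrite csum_swap. csum_congr. ring.
  - apply csum_ext; intros i Hi. rewrite <- (csum_kron_l d i (A i)) by auto.
    apply csum_ext; intros j Hj. rewrite orthonormal_kron, kron_sym by auto. ring.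
Qed.

End OrthonormalBasis.

Lemma inner_spectral d u f x :
  inner d x (mapply d (spectral_sum d u f) x) =
  csum d (fun k => Cmul (RtoC (f k)) (Cmul (Cconj (inner d (u k) x)) (inner d (u k) x))).
Proof.
  unfold inner, mapply, spectral_sum, outer.
  setoid_rewrite csum_conj. setoid_rewrite Cconj_mul. setoid_rewrite Cconj_invol. pull_csum.
  transitivity (csum d (fun i => csum d (fun k => csum d (fun j =>
      Cmul (Cconj (x i)) (Cmul (Cmul (RtoC (f k)) (Cmul (u k i) (Cconj (u k j)))) (x j)))))).
  - apply csum_ext; intros. apply csum_swap.
  - rewrite csum_swap. apply csum_ext; intros. rewrite csum_swap. csum_congr. ring.
Qed.

Lemma spectral_hermitian d u f : hermitian d (spectral_sum d u f).
Proof.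
  intros i j Hi Hj. unfold spectral_sum, outer.
  rewrite csum_conj. csum_congr. rewrite !Cconj_mul, Cconj_RtoC, Cconj_invol. ring.
Qed.

Lemma spectral_pd d u f : orthonormal d u -> (forall k, (k < d)%nat -> 0 < f k) ->
  pd d (spectral_sum d u f).
Proof.
  intros Hu Hf. split; [apply spectral_hermitian|].
  intros x [i [Hi Hx]].
  destruct (basis_coeff_nonzero d u Hu x i Hi Hx) as [k [Hk Hck]].
  rewrite inner_spectral, fst_csum.
  apply Rlt_le_trans
    with (fst (Cmul (RtoC (f k)) (Cmul (Cconj (inner d (u k) x)) (inner d (u k) x)))).
  - rewrite fst_RtoC_mul. apply Rmult_lt_0_compat; [auto|apply normsq_pos; auto].
  - apply (rsum_ge_term d (fun k => fst (Cmul (RtoC (f k))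
      (Cmul (Cconj (inner d (u k) x)) (inner d (u k) x))))); auto. intros j Hj.
    rewrite fst_RtoC_mul, fst_conj_mul. specialize (Hf j Hj). nra.
Qed.

Lemma spectral_mat_log d u lam : orthonormal d u -> (forall k, (k < d)%nat -> 0 < lam k) ->
  mat_log d (spectral_sum d u lam) (spectral_sum d u (fun k => ln (lam k))).
Proof. intros Hu Hl. exists u, lam. repeat split; auto; intros ? ? ? ?; reflexivity. Qed.

Lemma unit_vector_nonzero d v : inner d v v = C1 -> nonzero_vec d v.
Proof.
  intros H. apply NNPP; intros Hn.
  assert (E : inner d v v = C0).
  { apply csum_zero; intros a Ha.
    destruct (classic (v a = C0)) as [E|E]; [rewrite E; ring|].
    exfalso; apply Hn; exists a; auto. }
  rewrite H in E. unfold C1, C0 in E. injection E; lra.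
Qed.

Lemma orthonormal_proj_family d u : orthonormal d u ->
  proj_family d (fun k => outer (u k) (u k)).
Proof.
  intros Hu. split.
  - intros i Hi. exists (u i). split; [apply orthonormal_unit; auto|].
    intros a b _ _; reflexivity.
  - intros i j Hi Hj Hij a b Ha Hb. unfold mmul, outer.
    transitivity (Cmul (Cmul (u i a) (inner d (u i) (u j))) (Cconj (u j b))).
    + unfold inner. pull_csum. csum_congr. ring.
    + rewrite Hu by auto. destruct Nat.eq_dec; [lia|]. ring.
Qed.

Lemma proj_family_orthonormal d P : proj_family d P ->
  exists u, orthonormal d u /\ forall k, (k < d)%nat -> meq d (P k) (outer (u k) (u k)).
Proof.
  intros [Hrank1 Horth].
  destruct (choice (fun k v => (k < d)%nat -> inner d v v = C1 /\ meq d (P k) (outer v v)))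
    as [u Hu].
  { intros k. destruct (lt_dec k d) as [Hk|Hk].
    - destruct (Hrank1 k Hk) as [v Hv]. exists v; auto.
    - exists (fun _ => C0). intros; lia. }
  exists u. split; [|intros k Hk; apply Hu; auto].
  intros i j Hi Hj. destruct Nat.eq_dec as [<-|Hij]; [apply Hu; auto|].
  destruct (unit_vector_nonzero d (u i) (proj1 (Hu i Hi))) as [a [Ha Hua]].
  destruct (unit_vector_nonzero d (u j) (proj1 (Hu j Hj))) as [b [Hb Hub]].
  assert (E : Cmul (Cmul (u i a) (inner d (u i) (u j))) (Cconj (u j b)) = C0).
  { rewrite <- (Horth i j Hi Hj Hij a b Ha Hb). unfold mmul.
    rewrite (csum_ext d _ (fun c => Cmul (outer (u i) (u i) a c) (outer (u j) (u j) c b))).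
    - unfold inner, outer. pull_csum. csum_congr. ring.
    - intros c Hc. rewrite (proj2 (Hu i Hi)), (proj2 (Hu j Hj)) by auto. reflexivity. }
  apply Cmul_eq0 in E as [E|E]; [apply Cmul_eq0 in E as [E|E]|]; auto; try contradiction.
  exfalso. apply Hub. rewrite <- (Cconj_invol (u j b)), E. apply Cconj_0.
Qed.

Lemma Ele_trans x y z : Ele x y -> Ele y z -> Ele x z.
Proof. destruct x, y, z; simpl; auto; try lra; tauto. Qed.

Lemma Ele_PInf_l x : Ele PInf x -> x = PInf.
Proof. destruct x; simpl; tauto. Qed.

Lemma Eadd_le a b c e : Ele a b -> Ele c e -> b <> MInf -> e <> MInf ->
  a <> PInf -> c <> PInf -> Ele (Eadd a c) (Eadd b e).
Proof. destruct a, b, c, e; simpl; intros; auto; try lra; congruence. Qed.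

Lemma Esum_ne_MInf n f : (forall k, (k < n)%nat -> f k <> MInf) -> Esum n f <> MInf.
Proof.
  induction n; intros H; simpl; [discriminate|].
  assert (Esum n f <> MInf) by (apply IHn; intros; apply H; lia).
  assert (f n <> MInf) by (apply H; lia).
  destruct (Esum n f), (f n); simpl; congruence.
Qed.

Lemma Esum_le n g f : (forall k, (k < n)%nat -> Ele (Fin (g k)) (f k)) ->
  (forall k, (k < n)%nat -> f k <> MInf) -> Ele (Fin (rsum n g)) (Esum n f).
Proof.
  induction n; intros Hle Hf; simpl; [lra|].
  change (Ele (Eadd (Fin (rsum n g)) (Fin (g n))) (Eadd (Esum n f) (f n))).
  apply Eadd_le; try discriminate.
  - apply IHn; intros; [apply Hle|apply Hf]; lia.
  - apply Hle; lia.
  - apply Esum_ne_MInf; intros; apply Hf; lia.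
  - apply Hf; lia.
Qed.

Lemma Esum_ext n f g : (forall k, (k < n)%nat -> f k = g k) -> Esum n f = Esum n g.
Proof.
  induction n; intros H; simpl; [reflexivity|].
  rewrite IHn, H by (intros; try apply H; lia). reflexivity.
Qed.

Lemma Esum_fin n f g : (forall k, (k < n)%nat -> f k = Fin (g k)) -> Esum n f = Fin (rsum n g).
Proof.
  induction n; intros H; simpl; [reflexivity|].
  rewrite IHn, H by (intros; try apply H; lia). reflexivity.
Qed.

Lemma Esum_PInf n f k : (forall i, (i < n)%nat -> f i <> MInf) -> (k < n)%nat ->
  f k = PInf -> Esum n f = PInf.
Proof.
  induction n; intros H Hk Hf; [lia|]. simpl.
  destruct (Nat.eq_dec k n) as [<-|].
  - rewrite Hf. destruct (Esum k f); reflexivity.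
  - rewrite IHn by (auto; try lia; intros; apply H; lia). reflexivity.
Qed.

Lemma rel_term_ne_MInf p q : rel_term p q <> MInf.
Proof. unfold rel_term; repeat destruct Req_EM_T; discriminate. Qed.

Lemma lub_exists (S : ER -> Prop) : exists v, is_lub_E S v.
Proof.
  destruct (classic (S PInf)) as [HP|HP].
  { exists PInf; split; [intros y _; destruct y; simpl; auto|].
    intros z Hz. exact (Hz _ HP). }
  destruct (classic (exists r, S (Fin r))) as [[r0 Hr0]|HF].
  2:{ exists MInf; split; [|intros; exact I].
      intros [r| |] Hy; simpl; auto. apply HF; eauto. }
  destruct (classic (bound (fun r => S (Fin r)))) as [Hb|Hb].
  - destruct (completeness _ Hb (ex_intro _ r0 Hr0)) as [m [Hm1 Hm2]].
    exists (Fin m); split.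
    + intros [r| |] Hy; simpl; [exact (Hm1 r Hy)|exact (HP Hy)|exact I].
    + intros [z| |] Hz; simpl; auto.
      * apply Hm2. intros r Hr. exact (Hz _ Hr).
      * exact (Hz _ Hr0).
  - exists PInf; split; [intros y _; destruct y; simpl; auto|].
    intros [z| |] Hz; simpl; auto.
    + apply Hb. exists z. intros r Hr. exact (Hz _ Hr).
    + exact (Hz _ Hr0).
Qed.

Lemma Ele_fin_of_approx D Q z : 0 <= Q ->
  (forall e, 0 < e -> Ele (Fin (D - e * Q)) z) -> Ele (Fin D) z.
Proof.
  intros HQ H. destruct z as [zz| |]; simpl; auto.
  - apply Rnot_lt_le; intros Hlt.
    set (e := (D - zz) / (2 * (Q + 1))).
    assert (He : 0 < e) by (unfold e; apply Rdiv_lt_0_compat; lra).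
    specialize (H e He); simpl in H.
    assert (e * Q < D - zz).
    { apply Rmult_lt_reg_r with (2 * (Q + 1)); [lra|].
      replace (e * Q * (2 * (Q + 1))) with ((D - zz) * Q) by (unfold e; field; lra). nra. }
    lra.
  - exact (H 1 Rlt_0_1).
Qed.

Lemma PInf_of_unbounded c z : (forall t, Ele (Fin (t + c)) z) -> z = PInf.
Proof.
  intros H. destruct z as [zz| |]; auto.
  - specialize (H (zz - c + 1)). simpl in H. lra.
  - contradiction (H 0).
Qed.

Lemma ln_le_sub1 x : 0 < x -> ln x <= x - 1.
Proof. intros Hx. pose proof (exp_ineq1_le (ln x)). rewrite exp_ln in H by auto. lra. Qed.

Lemma ln_div x y : 0 < x -> 0 < y -> ln (x / y) = ln x - ln y.
Proof.
  intros. unfold Rdiv. rewrite ln_mult, ln_Rinv; auto. apply Rinv_0_lt_compat; auto.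
Qed.

Definition dot (n : nat) (a b : nat -> R) : R := rsum n (fun k => a k * b k).

Definition rel_entropy (n : nat) (p q : nat -> R) : ER :=
  Esum n (fun k => rel_term (p k) (q k)).

(* The termwise form of Gibbs' inequality, from [ln (l q / p) <= l q / p - 1]. *)
Lemma rel_term_ge p q l : 0 <= p -> 0 <= q -> 0 < l ->
  Ele (Fin (ln l * p + (p - l * q))) (rel_term p q).
Proof.
  intros Hp Hq Hl. unfold rel_term.
  destruct Req_EM_T as [->|Hp0]; [simpl; nra|].
  destruct Req_EM_T as [->|Hq0]; [exact I|]. simpl.
  assert (Hp' : 0 < p) by lra. assert (Hq' : 0 < q) by lra.
  assert (H := ln_le_sub1 (l * q / p) ltac:(apply Rdiv_lt_0_compat; nra)).
  rewrite ln_div, ln_mult in H by nra. rewrite ln_div by lra.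
  apply Rmult_le_compat_l with (r := p) in H; [|lra].
  replace (p * (l * q / p - 1)) with (l * q - p) in H by (field; lra). nra.
Qed.

Section ClassicalRelEntropy.
Variables (n : nat) (p q : nat -> R).
Hypotheses (Hp : forall k, (k < n)%nat -> 0 <= p k)
           (Hq : forall k, (k < n)%nat -> 0 <= q k)
           (Hp1 : rsum n p = 1).

Lemma rel_entropy_ge_var2 lam : (forall k, (k < n)%nat -> 0 < lam k) ->
  Ele (Fin (dot n (fun k => ln (lam k)) p + (1 - dot n lam q))) (rel_entropy n p q).
Proof.
  intros Hl.
  replace (dot n (fun k => ln (lam k)) p + (1 - dot n lam q))
    with (rsum n (fun k => ln (lam k) * p k + (p k - lam k * q k))).
  - apply Esum_le; intros; [apply rel_term_ge; auto|apply rel_term_ne_MInf].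
  - unfold dot. rewrite rsum_add, rsum_sub, Hp1. reflexivity.
Qed.

Lemma rel_entropy_PInf k0 : (k0 < n)%nat -> p k0 <> 0 -> q k0 = 0 ->
  rel_entropy n p q = PInf.
Proof.
  intros Hk Hp0 Hq0. apply Esum_PInf with k0; auto; [intros; apply rel_term_ne_MInf|].
  unfold rel_term. destruct Req_EM_T; [contradiction|].
  destruct Req_EM_T; [reflexivity|contradiction].
Qed.

Lemma rel_entropy_ge_var1 lam : (forall k, (k < n)%nat -> 0 < lam k) ->
  Ele (Fin (dot n (fun k => ln (lam k)) p - ln (dot n lam q))) (rel_entropy n p q).
Proof.
  intros Hl. set (S := dot n lam q).
  assert (Hterm : forall k, (k < n)%nat -> 0 <= lam k * q k)
    by (intros k Hk; specialize (Hl k Hk); specialize (Hq k Hk); nra).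
  destruct (Rle_lt_or_eq_dec 0 S (rsum_nonneg _ _ Hterm)) as [HS|HS0].
  - (* rescale [lam] so that [dot n lam q = 1] *)
    assert (H := rel_entropy_ge_var2 (fun k => lam k / S)
                   ltac:(intros; apply Rdiv_lt_0_compat; auto)).
    replace (dot n (fun k => lam k / S) q) with 1 in H.
    + replace (dot n (fun k => ln (lam k / S)) p)
        with (dot n (fun k => ln (lam k)) p - ln S) in H.
      { rewrite Rminus_diag, Rplus_0_r in H. exact H. }
      replace (ln S) with (rsum n (fun k => ln S * p k)) by (rewrite rsum_scal, Hp1; ring).
      unfold dot. rewrite <- rsum_sub.
      apply rsum_ext; intros k Hk. rewrite ln_div by auto. ring.
    + unfold dot, Rdiv.
      rewrite (rsum_ext n _ (fun k => / S * (lam k * q k))) by (intros; ring).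
      rewrite rsum_scal. fold (dot n lam q). fold S. field. lra.
  - assert (Hk : exists k, (k < n)%nat /\ p k <> 0).
    { apply NNPP; intros Hn. rewrite rsum_zero in Hp1; [lra|].
      intros k Hk. apply NNPP; intros Hpk. apply Hn; eauto. }
    destruct Hk as [k [Hk Hpk]].
    rewrite (rel_entropy_PInf k); auto; [exact I|].
    assert (E : lam k * q k = 0).
    { apply Rle_antisym; [|auto]. rewrite HS0.
      apply (rsum_ge_term n (fun k => lam k * q k)); auto. }
    specialize (Hl k Hk). nra.
Qed.

(* [g] stands for the part of the variational expression depending on [tr[sigma w]]:
   [- ln] for the first expression, [1 - _] for the second. *)
Section UpperBound.
Variables (g : R -> R) (z : ER).
Hypothesis Hz : forall lam, (forall k, (k < n)%nat -> 0 < lam k) ->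
  Ele (Fin (dot n (fun k => ln (lam k)) p + g (dot n lam q))) z.

(* concentrating [lam] on an outcome with [p > 0 = q] *)
Lemma bound_PInf_of_support_gap k0 : (k0 < n)%nat -> p k0 <> 0 -> q k0 = 0 -> z = PInf.
Proof.
  intros Hk0 Hp0 Hq0. apply (PInf_of_unbounded (g (rsum n q))). intros t.
  set (lam := fun k => if Nat.eq_dec k k0 then exp (t / p k0) else 1).
  replace (rsum n q) with (dot n lam q).
  - replace t with (dot n (fun k => ln (lam k)) p) at 1.
    + apply Hz. intros k _. unfold lam. destruct Nat.eq_dec; [apply exp_pos|lra].
    + rewrite <- (rsum_single n k0 t) by auto. apply rsum_ext; intros k Hk.
      unfold lam. destruct Nat.eq_dec as [->|]; [rewrite ln_exp; field; auto|].
      rewrite ln_1; ring.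
  - apply rsum_ext; intros k Hk. unfold lam. destruct Nat.eq_dec as [->|]; [|ring].
    rewrite Hq0; ring.
Qed.

Hypothesis Hg : forall x, 0 <= x -> - x <= g (1 + x).

(* [lam = p / q] on the support of [p] and [lam = e -> 0] off it *)
Lemma rel_entropy_le_of_support : (forall k, (k < n)%nat -> p k <> 0 -> 0 < q k) ->
  Ele (rel_entropy n p q) z.
Proof.
  intros Hsupp.
  set (D := rsum n (fun k => if Req_EM_T (p k) 0 then 0 else p k * ln (p k / q k))).
  set (Q := rsum n (fun k => if Req_EM_T (p k) 0 then q k else 0)).
  assert (HQ : 0 <= Q) by (apply rsum_nonneg; intros k Hk; destruct Req_EM_T; auto; lra).
  replace (rel_entropy n p q) with (Fin D).
  2:{ symmetry. apply Esum_fin; intros k Hk. unfold rel_term.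
      destruct Req_EM_T as [|Hpk]; [reflexivity|]. specialize (Hsupp k Hk Hpk).
      destruct Req_EM_T; [lra|reflexivity]. }
  apply (Ele_fin_of_approx D Q); auto. intros e He.
  set (lam := fun k => if Req_EM_T (p k) 0 then e else p k / q k).
  assert (EL : dot n (fun k => ln (lam k)) p = D).
  { apply rsum_ext; intros k Hk. unfold lam. destruct Req_EM_T as [->|]; ring. }
  assert (ES : dot n lam q = 1 + e * Q).
  { rewrite <- Hp1. unfold Q. rewrite <- rsum_scal, <- rsum_add. apply rsum_ext; intros k Hk.
    unfold lam. destruct Req_EM_T as [->|Hpk]; [ring|].
    field. apply Rgt_not_eq, Hsupp; auto. }
  apply Ele_trans with (Fin (D + g (1 + e * Q))).
  - simpl. specialize (Hg (e * Q) ltac:(nra)). lra.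
  - rewrite <- EL, <- ES. apply Hz. intros k Hk. unfold lam. destruct Req_EM_T; auto.
    apply Rdiv_lt_0_compat; [destruct (Hp k Hk); congruence|apply Hsupp; auto].
Qed.

Lemma rel_entropy_le_of_bound : Ele (rel_entropy n p q) z.
Proof.
  destruct (classic (exists k0, (k0 < n)%nat /\ p k0 <> 0 /\ q k0 = 0))
    as [[k0 [Hk0 [Hp0 Hq0]]]|Hgap].
  - rewrite (bound_PInf_of_support_gap k0) by auto. destruct (rel_entropy n p q); exact I.
  - apply rel_entropy_le_of_support. intros k Hk Hpk.
    destruct (Hq k Hk) as [|Hq0]; auto. exfalso; apply Hgap; eauto.
Qed.

End UpperBound.

End ClassicalRelEntropy.

Definition meas_distr (d : nat) (A : Mat) (u : nat -> Vec) (k : nat) : R :=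
  fst (inner d (u k) (mapply d A (u k))).

Definition basis_rel_entropy (d : nat) (rho sigma : Mat) (u : nat -> Vec) : ER :=
  rel_entropy d (meas_distr d rho u) (meas_distr d sigma u).

Lemma DP_set_basis d rho sigma y :
  DP_set d rho sigma y <-> exists u, orthonormal d u /\ y = basis_rel_entropy d rho sigma u.
Proof.
  split.
  - intros [P [HP ->]]. destruct (proj_family_orthonormal d P HP) as [u [Hu HPu]].
    exists u; split; auto. apply Esum_ext; intros k Hk.
    unfold meas_distr. rewrite !(trace_meq_l d (P k) (outer (u k) (u k))), !trace_outer by auto.
    reflexivity.
  - intros [u [Hu ->]]. exists (fun k => outer (u k) (u k)).
    split; [apply orthonormal_proj_family; auto|].
    apply Esum_ext; intros k Hk. unfold meas_distr. rewrite !trace_outer. reflexivity.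
Qed.

Lemma meas_distr_nonneg d A u k : psd d A -> 0 <= meas_distr d A u k.
Proof. intros [_ H]. apply H. Qed.

Lemma meas_distr_sum d rho u : density d rho -> orthonormal d u ->
  rsum d (meas_distr d rho u) = 1.
Proof.
  intros [_ Ht] Hu. unfold meas_distr.
  rewrite <- fst_csum, trace_basis_sum, Ht by auto. reflexivity.
Qed.

Lemma trace_mul_spectral d A u f :
  fst (trace d (mmul d A (spectral_sum d u f))) = dot d f (meas_distr d A u).
Proof.
  rewrite trace_spectral, fst_csum. apply rsum_ext; intros. apply fst_RtoC_mul.
Qed.

Section Variational.
Variables (d : nat) (rho sigma : Mat).

Lemma var1_spectral w L u lam :
  meq d w (spectral_sum d u lam) -> meq d L (spectral_sum d u (fun k => ln (lam k))) ->
  var1 d rho sigma w L = dot d (fun k => ln (lam k)) (meas_distr d rho u)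
                         - ln (dot d lam (meas_distr d sigma u)).
Proof.
  intros Hw HL. unfold var1.
  rewrite (trace_meq_r d rho L _ HL), (trace_meq_r d sigma w _ Hw), !trace_mul_spectral.
  reflexivity.
Qed.

Lemma var2_spectral w L u lam :
  meq d w (spectral_sum d u lam) -> meq d L (spectral_sum d u (fun k => ln (lam k))) ->
  var2 d rho sigma w L = dot d (fun k => ln (lam k)) (meas_distr d rho u)
                         + (1 - dot d lam (meas_distr d sigma u)).
Proof.
  intros Hw HL. unfold var2.
  rewrite (trace_meq_r d rho L _ HL), (trace_meq_r d sigma w _ Hw), !trace_mul_spectral.
  ring.
Qed.

Lemma set1_spectral u lam : orthonormal d u -> (forall k, (k < d)%nat -> 0 < lam k) ->
  set1 d rho sigma (Fin (dot d (fun k => ln (lam k)) (meas_distr d rho u)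
                         - ln (dot d lam (meas_distr d sigma u)))).
Proof.
  intros Hu Hl. exists (spectral_sum d u lam), (spectral_sum d u (fun k => ln (lam k))).
  split; [apply spectral_pd|split; [apply spectral_mat_log|]]; auto.
  rewrite (var1_spectral _ _ u lam) by apply meq_refl. reflexivity.
Qed.

Lemma set2_spectral u lam : orthonormal d u -> (forall k, (k < d)%nat -> 0 < lam k) ->
  set2 d rho sigma (Fin (dot d (fun k => ln (lam k)) (meas_distr d rho u)
                         + (1 - dot d lam (meas_distr d sigma u)))).
Proof.
  intros Hu Hl. exists (spectral_sum d u lam), (spectral_sum d u (fun k => ln (lam k))).
  split; [apply spectral_pd|split; [apply spectral_mat_log|]]; auto.
  rewrite (var2_spectral _ _ u lam) by apply meq_refl. reflexivity.
Qed.

Hypotheses (Hrho : density d rho) (Hsigma : psd d sigma).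

Lemma set1_le_basis y : set1 d rho sigma y ->
  exists u, orthonormal d u /\ Ele y (basis_rel_entropy d rho sigma u).
Proof.
  intros [w [L [_ [[u [lam [Hu [Hl [Hw HL]]]]] ->]]]].
  exists u; split; auto. rewrite (var1_spectral _ _ u lam) by auto.
  apply rel_entropy_ge_var1; auto; intros.
  - apply meas_distr_nonneg, Hrho.
  - apply meas_distr_nonneg, Hsigma.
  - apply meas_distr_sum; auto.
Qed.

Lemma set2_le_basis y : set2 d rho sigma y ->
  exists u, orthonormal d u /\ Ele y (basis_rel_entropy d rho sigma u).
Proof.
  intros [w [L [_ [[u [lam [Hu [Hl [Hw HL]]]]] ->]]]].
  exists u; split; auto. rewrite (var2_spectral _ _ u lam) by auto.
  apply rel_entropy_ge_var2; auto; intros.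
  - apply meas_distr_nonneg, Hrho.
  - apply meas_distr_nonneg, Hsigma.
  - apply meas_distr_sum; auto.
Qed.

Lemma basis_le_of_set1_bound u z : orthonormal d u ->
  (forall y, set1 d rho sigma y -> Ele y z) -> Ele (basis_rel_entropy d rho sigma u) z.
Proof.
  intros Hu Hz. apply rel_entropy_le_of_bound with (g := fun x => - ln x).
  - intros; apply meas_distr_nonneg, Hrho.
  - intros; apply meas_distr_nonneg, Hsigma.
  - apply meas_distr_sum; auto.
  - intros lam Hl. apply Hz, set1_spectral; auto.
  - intros x Hx. pose proof (ln_le_sub1 (1 + x)). lra.
Qed.

Lemma basis_le_of_set2_bound u z : orthonormal d u ->
  (forall y, set2 d rho sigma y -> Ele y z) -> Ele (basis_rel_entropy d rho sigma u) z.
Proof.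
  intros Hu Hz. apply rel_entropy_le_of_bound with (g := fun x => 1 - x).
  - intros; apply meas_distr_nonneg, Hrho.
  - intros; apply meas_distr_nonneg, Hsigma.
  - apply meas_distr_sum; auto.
  - intros lam Hl. apply Hz, set2_spectral; auto.
  - intros x Hx. lra.
Qed.

End Variational.

Lemma is_lub_E_transfer (S T : ER -> Prop) v : is_lub_E S v ->
  (forall y, T y -> exists y', S y' /\ Ele y y') ->
  (forall y, S y -> forall z, (forall t, T t -> Ele t z) -> Ele y z) -> is_lub_E T v.
Proof.
  intros [Hub Hleast] HT HS. split.
  - intros y Hy. destruct (HT y Hy) as [y' [Hy' Hle]]. apply Ele_trans with y'; auto.
  - intros z Hz. apply Hleast. intros y Hy. apply HS; auto.
Qed.

Lemma lub_set1 d rho sigma v : density d rho -> psd d sigma ->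
  is_lub_E (DP_set d rho sigma) v -> is_lub_E (set1 d rho sigma) v.
Proof.
  intros Hr Hs Hv. apply (is_lub_E_transfer _ _ _ Hv).
  - intros y Hy. destruct (set1_le_basis d rho sigma Hr Hs y Hy) as [u [Hu Hle]].
    exists (basis_rel_entropy d rho sigma u). split; auto. apply DP_set_basis; eauto.
  - intros y Hy z Hz. apply DP_set_basis in Hy as [u [Hu ->]].
    apply basis_le_of_set1_bound; auto.
Qed.

Lemma lub_set2 d rho sigma v : density d rho -> psd d sigma ->
  is_lub_E (DP_set d rho sigma) v -> is_lub_E (set2 d rho sigma) v.
Proof.
  intros Hr Hs Hv. apply (is_lub_E_transfer _ _ _ Hv).
  - intros y Hy. destruct (set2_le_basis d rho sigma Hr Hs y Hy) as [u [Hu Hle]].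
    exists (basis_rel_entropy d rho sigma u). split; auto. apply DP_set_basis; eauto.
  - intros y Hy z Hz. apply DP_set_basis in Hy as [u [Hu ->]].
    apply basis_le_of_set2_bound; auto.
Qed.

Lemma inner_self_nonneg d x : 0 <= fst (inner d x x).
Proof.
  unfold inner. rewrite fst_csum. apply rsum_nonneg; intros. rewrite fst_conj_mul. nra.
Qed.

Lemma inner_self_pos d x i : (i < d)%nat -> x i <> C0 -> 0 < fst (inner d x x).
Proof.
  intros Hi Hx. unfold inner. rewrite fst_csum.
  apply Rlt_le_trans with (fst (Cmul (Cconj (x i)) (x i))); [apply normsq_pos; auto|].
  apply (rsum_ge_term d (fun i => fst (Cmul (Cconj (x i)) (x i)))); auto.
  intros; rewrite fst_conj_mul; nra.
Qed.

Lemma inner_self_eq0 d x : fst (inner d x x) = 0 -> forall i, (i < d)%nat -> x i = C0.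
Proof.
  intros H i Hi. apply NNPP; intros Hx. pose proof (inner_self_pos d x i Hi Hx). lra.
Qed.

Lemma inner_hermitian d A x y : hermitian d A ->
  inner d x (mapply d A y) = Cconj (inner d y (mapply d A x)).
Proof.
  intros H. unfold inner, mapply. rewrite csum_conj. setoid_rewrite Cconj_mul.
  setoid_rewrite csum_conj. setoid_rewrite Cconj_mul. pull_csum.
  rewrite csum_swap. apply csum_ext; intros i Hi. apply csum_ext; intros j Hj.
  rewrite (H j i), Cconj_invol by auto. ring.
Qed.

Lemma quad_form_expand d A x y t :
  inner d (fun i => Cadd (x i) (Cmul (RtoC t) (y i)))
          (mapply d A (fun i => Cadd (x i) (Cmul (RtoC t) (y i)))) =
  Cadd (Cadd (inner d x (mapply d A x))
             (Cmul (RtoC t) (Cadd (inner d x (mapply d A y)) (inner d y (mapply d A x)))))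
       (Cmul (Cmul (RtoC t) (RtoC t)) (inner d y (mapply d A y))).
Proof.
  unfold inner, mapply. pull_csum.
  transitivity (csum d (fun i => csum d (fun j =>
    Cadd (Cadd (Cadd (Cmul (Cconj (x i)) (Cmul (A i j) (x j)))
      (Cmul (RtoC t) (Cmul (Cconj (x i)) (Cmul (A i j) (y j)))))
      (Cmul (RtoC t) (Cmul (Cconj (y i)) (Cmul (A i j) (x j)))))
      (Cmul (Cmul (RtoC t) (RtoC t)) (Cmul (Cconj (y i)) (Cmul (A i j) (y j))))))).
  - csum_congr. rewrite Cconj_add, Cconj_mul, Cconj_RtoC. ring.
  - repeat setoid_rewrite csum_add. repeat setoid_rewrite csum_mull. ring.
Qed.

(* With [y = A x], positivity of [<x + t y, A (x + t y)>] for all real [t] reads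
   [0 <= 2 t |y|^2 + t^2 <y, A y>], which forces [y = 0]. *)
Lemma psd_quad_form_eq0 d A x : psd d A -> fst (inner d x (mapply d A x)) = 0 ->
  forall i, (i < d)%nat -> mapply d A x i = C0.
Proof.
  intros [Hh Hp] H0. set (y := mapply d A x).
  set (b := fst (inner d y y)). set (c := fst (inner d y (mapply d A y))).
  assert (Hc : 0 <= c) by apply Hp.
  assert (Hb : 0 <= b) by apply inner_self_nonneg.
  assert (Ht : forall t, 0 <= 2 * t * b + t * t * c).
  { intros t. pose proof (Hp (fun i => Cadd (x i) (Cmul (RtoC t) (y i)))) as Hq.
    rewrite quad_form_expand, (inner_hermitian d A x y Hh) in Hq.
    unfold Cadd, Cmul, RtoC, Cconj in Hq. simpl in Hq. fold y in Hq, H0.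
    unfold b, c. rewrite H0 in Hq. nra. }
  apply inner_self_eq0. fold y b. specialize (Ht (- b / (c + 1))).
  replace (2 * (- b / (c + 1)) * b + - b / (c + 1) * (- b / (c + 1)) * c)
    with (- (b * b * (c + 2)) * / ((c + 1) * (c + 1))) in Ht by (field; lra).
  assert (0 < / ((c + 1) * (c + 1))) by (apply Rinv_0_lt_compat; nra).
  assert (b * b * (c + 2) <= 0) by nra. nra.
Qed.

Definition reflection (w : Vec) (al : R) (k : nat) : Vec :=
  fun i => Csub (kron i k) (Cmul (RtoC al) (Cmul (w i) (Cconj (w k)))).

(* [I - al w w^*] is unitary as soon as [al^2 <w, w> = 2 al]. *)
Lemma reflection_orthonormal d w al c : inner d w w = RtoC c -> al * al * c = 2 * al ->
  orthonormal d (reflection w al).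
Proof.
  intros Hww Hal k l Hk Hl.
  transitivity (csum d (fun i => Cadd (Cadd (Cadd (Cmul (kron i k) (kron i l))
     (Cmul (Cmul (RtoC (- al)) (Cconj (w l))) (Cmul (kron i k) (w i))))
     (Cmul (Cmul (RtoC (- al)) (w k)) (Cmul (kron i l) (Cconj (w i)))))
     (Cmul (Cmul (RtoC (al * al)) (Cmul (w k) (Cconj (w l)))) (Cmul (Cconj (w i)) (w i))))).
  - unfold inner, reflection. csum_congr. unfold Csub.
    rewrite !Cconj_add, !Cconj_opp, !Cconj_mul, Cconj_kron, Cconj_RtoC, Cconj_invol.
    apply C_ext; unfold Cadd, Cmul, Copp, RtoC; simpl; ring.
  - repeat setoid_rewrite csum_add. repeat setoid_rewrite csum_mull.
    rewrite (csum_kron d k (fun i => kron i l)), (csum_kron d k w),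
      (csum_kron d l (fun i => Cconj (w i))) by auto.
    fold (inner d w w). rewrite Hww.
    transitivity (Cadd (kron k l) (Cmul (Cmul (w k) (Cconj (w l)))
      (Cadd (Cadd (RtoC (- al)) (RtoC (- al))) (Cmul (RtoC (al * al)) (RtoC c))))); [ring|].
    replace (Cadd (Cadd (RtoC (- al)) (RtoC (- al))) (Cmul (RtoC (al * al)) (RtoC c)))
      with C0 by (apply C_ext; simpl; lra).
    unfold kron; destruct Nat.eq_dec; ring.
Qed.

(* The reflection with [w = e_0 - y] maps [e_0] to [y]; [y_0] is real and [y_0 <= 0]
   so that [<w, w> = 2 - 2 y_0 > 0]. *)
Lemma unit_vector_extends_to_basis d y : (0 < d)%nat -> fst (inner d y y) = 1 ->
  snd (y 0%nat) = 0 -> fst (y 0%nat) <= 0 ->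
  exists u, orthonormal d u /\ forall i, (i < d)%nat -> u 0%nat i = y i.
Proof.
  intros Hd Hn Hs Hr.
  set (r := fst (y 0%nat)). set (w := fun i => Csub (kron i 0) (y i)).
  assert (Hyy : inner d y y = RtoC 1).
  { apply C_ext; [exact Hn|]. unfold inner. rewrite snd_csum. apply rsum_zero.
    intros; apply snd_conj_mul. }
  assert (Hy0 : y 0%nat = RtoC r) by (apply C_ext; simpl; auto).
  assert (Hww : inner d w w = RtoC (2 - 2 * r)).
  { transitivity (csum d (fun i => Cadd (Cadd (Cadd (Cmul (kron i 0) (kron i 0))
       (Cmul (Copp C1) (Cmul (kron i 0) (y i))))
       (Cmul (Copp C1) (Cmul (kron i 0) (Cconj (y i))))) (Cmul (Cconj (y i)) (y i)))).
    - unfold inner, w. csum_congr. unfold Csub. rewrite Cconj_add, Cconj_opp, Cconj_kron. ring.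
    - repeat setoid_rewrite csum_add. repeat setoid_rewrite csum_mull.
      rewrite !(csum_kron d 0) by auto. fold (inner d y y). rewrite Hyy, Hy0.
      unfold kron; destruct Nat.eq_dec; [|lia]. apply C_ext; simpl; ring. }
  assert (Hr1 : 0 < 1 - r) by (unfold r; lra).
  exists (reflection w (/ (1 - r))). split.
  - apply (reflection_orthonormal d w _ (2 - 2 * r) Hww). field. lra.
  - intros i Hi. unfold reflection.
    replace (Cconj (w 0%nat)) with (RtoC (1 - r)).
    + transitivity (Csub (kron i 0) (Cmul (w i) (RtoC (/ (1 - r) * (1 - r)))));
        [apply C_ext; simpl; ring|].
      rewrite Rinv_l by lra. unfold w, Csub. apply C_ext; simpl; ring.
    + unfold w. rewrite Hy0. unfold kron; destruct Nat.eq_dec; [|lia]. apply C_ext; simpl; ring.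
Qed.

Lemma inner_scale d A c x :
  inner d (fun i => Cmul c (x i)) (mapply d A (fun i => Cmul c (x i))) =
  Cmul (Cmul (Cconj c) c) (inner d x (mapply d A x)).
Proof. unfold inner, mapply. setoid_rewrite Cconj_mul. pull_csum. csum_congr. ring. Qed.

Lemma inner_scale_self d c x :
  inner d (fun i => Cmul c (x i)) (fun i => Cmul c (x i)) = Cmul (Cmul (Cconj c) c) (inner d x x).
Proof. unfold inner. setoid_rewrite Cconj_mul. pull_csum. csum_congr. ring. Qed.

Lemma fst_normsq_mul c z : fst (Cmul (Cmul (Cconj c) c) z) = fst (Cmul (Cconj c) c) * fst z.
Proof. unfold Cmul at 1. rewrite snd_conj_mul. simpl. ring. Qed.

Lemma normalizing_phase (N : R) (a : C) : 0 < N ->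
  exists c, fst (Cmul (Cconj c) c) * N = 1 /\ snd (Cmul c a) = 0 /\ fst (Cmul c a) <= 0.
Proof.
  intros HN. set (s := sqrt N). assert (Hs : 0 < s) by (apply sqrt_lt_R0; auto).
  assert (Hss : s * s = N) by (apply sqrt_sqrt; lra).
  destruct a as [a1 a2]. set (m := sqrt (a1 * a1 + a2 * a2)).
  assert (Hm2 : m * m = a1 * a1 + a2 * a2) by (apply sqrt_sqrt; nra).
  destruct (Rle_lt_or_eq_dec _ _ (sqrt_pos (a1 * a1 + a2 * a2))) as [Hm|Hm]; fold m in Hm.
  - exists (- a1 / (m * s), a2 / (m * s)). unfold Cmul, Cconj; simpl. split; [|split].
    + rewrite <- Hss. transitivity ((a1 * a1 + a2 * a2) / (m * m)); [field; split; lra|].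
      rewrite <- Hm2; field; lra.
    + field. split; lra.
    + replace (- a1 / (m * s) * a1 - a2 / (m * s) * a2) with (- (m * m) / (m * s))
        by (rewrite Hm2; field; split; lra).
      replace (- (m * m) / (m * s)) with (- (m / s)) by (field; split; lra).
      assert (0 < m / s) by (apply Rdiv_lt_0_compat; auto). lra.
  - exists (/ s, 0). unfold Cmul, Cconj; simpl.
    assert (a1 = 0 /\ a2 = 0) as [-> ->] by nra.
    split; [|split]; try lra. rewrite <- Hss. field. lra.
Qed.

Lemma not_supp_incl_basis d rho sigma : density d rho -> psd d sigma ->
  ~ supp_incl d rho sigma -> exists u, orthonormal d u /\ basis_rel_entropy d rho sigma u = PInf.
Proof.
  intros [Hr _] Hs Hn.
  apply not_all_ex_not in Hn as [x Hn]. apply imply_to_and in Hn as [Hsx Hn].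
  apply not_all_ex_not in Hn as [i Hn]. apply imply_to_and in Hn as [Hi Hrx].
  assert (Hd : (0 < d)%nat) by lia.
  assert (Hpx : 0 < fst (inner d x (mapply d rho x))).
  { destruct (proj2 Hr x) as [|E]; auto. exfalso. apply Hrx.
    apply psd_quad_form_eq0; auto. }
  assert (Hqx : inner d x (mapply d sigma x) = C0).
  { apply csum_zero. intros j Hj. rewrite Hsx by auto. ring. }
  assert (Hx : exists j, (j < d)%nat /\ x j <> C0).
  { apply NNPP; intros Hno. apply Hrx. apply csum_zero; intros j Hj.
    destruct (classic (x j = C0)) as [E|E]; [rewrite E; ring|]. exfalso; eauto. }
  destruct Hx as [j [Hj Hxj]].
  destruct (normalizing_phase _ (x 0%nat) (inner_self_pos d x j Hj Hxj)) as [c [Hc1 [Hc2 Hc3]]].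
  set (y := fun i => Cmul c (x i)).
  assert (Hyy : fst (inner d y y) = 1) by (unfold y; rewrite inner_scale_self, fst_normsq_mul; lra).
  destruct (unit_vector_extends_to_basis d y Hd Hyy Hc2 Hc3) as [u [Hu Hu0]].
  exists u. split; auto.
  assert (Hcpos : 0 < fst (Cmul (Cconj c) c)).
  { pose proof (inner_self_nonneg d x). rewrite fst_conj_mul in *. nra. }
  assert (Eu : forall A, meas_distr d A u 0%nat
                         = fst (Cmul (Cconj c) c) * fst (inner d x (mapply d A x))).
  { intros A. unfold meas_distr.
    rewrite <- fst_normsq_mul, <- inner_scale. f_equal.
    unfold inner, mapply. apply csum_ext; intros a Ha. rewrite Hu0 by auto. f_equal.
    apply csum_ext; intros b Hb. rewrite Hu0 by auto. reflexivity. }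
  apply (rel_entropy_PInf d _ _ 0%nat); auto.
  - rewrite Eu. nra.
  - rewrite Eu, Hqx. simpl. ring.
Qed.

Definition incr (phi : nat -> nat) : Prop := forall n, (phi n < phi (S n))%nat.

Lemma incr_ge phi : incr phi -> forall n, (n <= phi n)%nat.
Proof. intros H n; induction n; [lia|]. specialize (H n). lia. Qed.

Lemma incr_comp phi psi : incr phi -> incr psi -> incr (fun n => phi (psi n)).
Proof.
  intros H1 H2 n. assert (Hmono : forall a b, (a < b)%nat -> (phi a < phi b)%nat).
  { intros a b Hab. induction Hab; [apply H1|]. specialize (H1 m). lia. }
  apply Hmono, H2.
Qed.

Lemma Un_cv_subseq s l phi : incr phi -> Un_cv s l -> Un_cv (fun n => s (phi n)) l.
Proof.
  intros Hp H eps He. destruct (H eps He) as [N HN]. exists N. intros n Hn.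
  apply HN. pose proof (incr_ge phi Hp n). lia.
Qed.

Lemma inv_INR_small eps : 0 < eps -> exists N : nat, forall n, (n >= N)%nat -> / (INR n + 1) < eps.
Proof.
  intros He. destruct (archimed (/ eps)) as [H1 _].
  assert (0 < / eps) by (apply Rinv_0_lt_compat; auto).
  exists (Z.to_nat (up (/ eps))). intros n Hn.
  assert (Hz : (0 <= up (/ eps))%Z) by (apply le_IZR; lra).
  apply le_INR in Hn. rewrite INR_IZR_INZ, Z2Nat.id in Hn by auto.
  apply Rlt_le_trans with (/ / eps).
  - apply Rinv_lt_contravar; [nra|lra].
  - rewrite Rinv_inv; lra.
Qed.

Lemma cluster_point_subseq a l :
  (forall eps, 0 < eps -> forall N, exists p, (N <= p)%nat /\ Rabs (a p - l) < eps) ->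
  exists phi, incr phi /\ Un_cv (fun n => a (phi n)) l.
Proof.
  intros H.
  set (pick := fun N eps =>
    epsilon (inhabits 0%nat) (fun p => (N <= p)%nat /\ Rabs (a p - l) < eps)).
  assert (Hpick : forall N eps, 0 < eps ->
                  (N <= pick N eps)%nat /\ Rabs (a (pick N eps) - l) < eps)
    by (intros N eps He; apply epsilon_spec, H, He).
  assert (Hpos : forall n, 0 < / (INR n + 1))
    by (intros; apply Rinv_0_lt_compat; pose proof (pos_INR n); lra).
  set (phi := fix f n := match n with
                         | O => pick O 1
                         | S m => pick (S (f m)) (/ (INR (S m) + 1)) end).
  assert (Hb : forall n, Rabs (a (phi n) - l) < / (INR n + 1)).
  { intros [|n].
    - replace (/ (INR 0 + 1)) with 1 by (simpl; field). apply Hpick; lra.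
    - apply Hpick, Hpos. }
  exists phi. split.
  - intros n. apply (proj1 (Hpick (S (phi n)) _ (Hpos (S n)))).
  - intros eps He. destruct (inv_INR_small eps He) as [N HN]. exists N. intros n Hn.
    apply Rlt_trans with (/ (INR n + 1)); [apply Hb|apply HN; auto].
Qed.

Lemma bounded_subseq_cv a B : (forall n, Rabs (a n) <= B) ->
  exists phi l, incr phi /\ Un_cv (fun n => a (phi n)) l.
Proof.
  intros Hb.
  destruct (Bolzano_Weierstrass a (fun c => - B <= c <= B) (compact_P3 (-B) B)) as [l Hl].
  { intros n. specialize (Hb n). pose proof (Rle_abs (a n)). pose proof (Rle_abs (- a n)).
    rewrite Rabs_Ropp in *. lra. }
  destruct (cluster_point_subseq a l) as [phi [H1 H2]]; [|exists phi, l; auto].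
  intros eps He N.
  assert (Hn : neighbourhood (fun y => Rabs (y - l) < eps) l)
    by (exists (mkposreal eps He); intros y Hy; exact Hy).
  destruct (Hl _ N Hn) as [p [Hp1 Hp2]]. exists p; auto.
Qed.

Lemma bounded_subseq_cv_list {X I : Type} (c : I -> X -> R) (js : list I) (x : nat -> X) B :
  (forall j n, In j js -> Rabs (c j (x n)) <= B) ->
  exists phi, incr phi /\ forall j, In j js -> exists l, Un_cv (fun n => c j (x (phi n))) l.
Proof.
  revert x. induction js as [|j0 js IH]; intros x Hb.
  - exists (fun n => n). split; [intros n; lia|]. intros j [].
  - destruct (IH x) as [phi1 [Hp1 Hc1]]; [intros; apply Hb; simpl; auto|].
    destruct (bounded_subseq_cv (fun n => c j0 (x (phi1 n))) B) as [phi2 [l [Hp2 Hl]]].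
    { intros; apply Hb; simpl; auto. }
    exists (fun n => phi1 (phi2 n)). split; [apply incr_comp; auto|].
    intros j [<-|Hin]; [exists l; exact Hl|].
    destruct (Hc1 j Hin) as [l' Hl']. exists l'.
    apply (Un_cv_subseq (fun n => c j (x (phi1 n))) l' phi2); auto.
Qed.

Lemma lim_ge s L V : Un_cv s L -> (forall n, V - / (INR n + 1) < s n) -> V <= L.
Proof.
  intros H Hs. apply Rnot_lt_le; intros Hlt.
  set (e := (V - L) / 2). assert (He : 0 < e) by (unfold e; lra).
  destruct (H e He) as [N1 HN1]. destruct (inv_INR_small e He) as [N2 HN2].
  set (n := max N1 N2).
  specialize (HN1 n (Nat.le_max_l _ _)). specialize (HN2 n (Nat.le_max_r _ _)).
  specialize (Hs n). unfold Rdist in HN1. pose proof (Rle_abs (s n - L)). unfold e in *. lra.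
Qed.

Lemma lim_not_unbounded s L : Un_cv s L -> ~ (forall n, INR n < s n).
Proof.
  intros H Hs. destruct (H 1 Rlt_0_1) as [N HN].
  destruct (archimed (Rabs L + 1)) as [H1 _].
  assert (Hz : (0 <= up (Rabs L + 1))%Z) by (apply le_IZR; pose proof (Rabs_pos L); lra).
  set (n := (N + Z.to_nat (up (Rabs L + 1)))%nat).
  specialize (HN n ltac:(unfold n; lia)). specialize (Hs n).
  assert (INR n >= IZR (up (Rabs L + 1))).
  { unfold n. rewrite plus_INR, (INR_IZR_INZ (Z.to_nat _)), Z2Nat.id by auto.
    pose proof (pos_INR N). lra. }
  unfold Rdist in HN. pose proof (Rle_abs (s n - L)). pose proof (Rle_abs L). lra.
Qed.

Definition lub_approx (v : ER) (n : nat) : R :=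
  match v with Fin V => V - / (INR n + 1) | _ => INR n end.

Lemma lub_approx_exists {X : Type} (S : ER -> Prop) (P : X -> Prop) (f : X -> R) v :
  is_lub_E S v -> v <> MInf -> (forall y, S y -> exists x, P x /\ y = Fin (f x)) ->
  forall n, exists x, P x /\ lub_approx v n < f x.
Proof.
  intros [_ Hleast] Hv HS n. apply NNPP; intros Hno.
  assert (Hle : Ele v (Fin (lub_approx v n))).
  { apply Hleast. intros y Hy. destruct (HS y Hy) as [x [Hx ->]].
    simpl. apply Rnot_lt_le; intros Hlt. apply Hno; eauto. }
  unfold lub_approx in Hle. destruct v as [V| |]; simpl in Hle; auto.
  assert (0 < / (INR n + 1)) by (apply Rinv_0_lt_compat; pose proof (pos_INR n); lra). lra.
Qed.

Lemma lub_eq_subseq_limit v s phi L : incr phi -> (forall n, lub_approx v n < s n) ->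
  Un_cv (fun n => s (phi n)) L -> v <> MInf -> Ele (Fin L) v -> v = Fin L.
Proof.
  intros Hphi Hs HL Hv HLv. pose proof (fun n => le_INR _ _ (incr_ge phi Hphi n)) as Hge.
  destruct v as [V| |]; [|exfalso|contradiction].
  - f_equal. apply Rle_antisym; [|exact HLv]. apply (lim_ge _ _ V HL). intros n.
    specialize (Hs (phi n)). specialize (Hge n). simpl in Hs.
    assert (/ (INR (phi n) + 1) <= / (INR n + 1))
      by (apply Rinv_le_contravar; pose proof (pos_INR n); lra). lra.
  - apply (lim_not_unbounded _ _ HL). intros n. specialize (Hs (phi n)). specialize (Hge n).
    simpl in Hs. lra.
Qed.

Definition Ccv (s : nat -> C) (l : C) : Prop :=
  Un_cv (fun n => fst (s n)) (fst l) /\ Un_cv (fun n => snd (s n)) (snd l).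

Lemma Ccv_const c : Ccv (fun _ => c) c.
Proof.
  split; intros e He; exists O; intros; unfold Rdist; rewrite Rminus_diag, Rabs_R0; lra.
Qed.

Lemma Ccv_add s t a b : Ccv s a -> Ccv t b -> Ccv (fun n => Cadd (s n) (t n)) (Cadd a b).
Proof. intros [H1 H2] [H3 H4]. split; simpl; apply CV_plus; auto. Qed.

Lemma Ccv_mul s t a b : Ccv s a -> Ccv t b -> Ccv (fun n => Cmul (s n) (t n)) (Cmul a b).
Proof.
  intros [H1 H2] [H3 H4]. split; simpl; [apply CV_minus|apply CV_plus]; apply CV_mult; auto.
Qed.

Lemma Ccv_conj s a : Ccv s a -> Ccv (fun n => Cconj (s n)) (Cconj a).
Proof. intros [H1 H2]. split; simpl; [auto|apply (CV_opp _ _ H2)]. Qed.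

Lemma Ccv_csum m f g : (forall k, (k < m)%nat -> Ccv (fun n => f n k) (g k)) ->
  Ccv (fun n => csum m (f n)) (csum m g).
Proof.
  induction m; intros H; simpl; [apply Ccv_const|].
  apply Ccv_add; [apply IHm; intros; apply H; lia | apply H; lia].
Qed.

Lemma Ccv_ext s t a : (forall n, s n = t n) -> Ccv s a -> Ccv t a.
Proof.
  intros E [H1 H2].
  split; [apply (Un_cv_ext (fun n => fst (s n)))|apply (Un_cv_ext (fun n => snd (s n)))];
    auto; intros; rewrite E; reflexivity.
Qed.

Lemma Ccv_unique s a b : Ccv s a -> Ccv s b -> a = b.
Proof. intros [H1 H2] [H3 H4]. apply C_ext; eapply UL_sequence; eauto. Qed.

Lemma Un_cv_rsum m f g : (forall k, (k < m)%nat -> Un_cv (fun n => f n k) (g k)) ->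
  Un_cv (fun n => rsum m (f n)) (rsum m g).
Proof.
  induction m; intros H; simpl.
  - intros e He; exists O; intros; unfold Rdist; rewrite Rminus_diag, Rabs_R0; lra.
  - apply CV_plus; [apply IHm; intros; apply H; lia | apply H; lia].
Qed.

Lemma Un_cv_ln s l : 0 < l -> Un_cv s l -> Un_cv (fun n => ln (s n)) (ln l).
Proof.
  intros Hl H. apply continuity_seq; auto.
  apply derivable_continuous_pt. exists (/ l). apply derivable_pt_lim_ln; auto.
Qed.

Definition basis_cv (d : nat) (U : nat -> nat -> Vec) (us : nat -> Vec) : Prop :=
  forall k i, (k < d)%nat -> (i < d)%nat -> Ccv (fun n => U n k i) (us k i).

Lemma basis_cv_inner d U us k l : basis_cv d U us -> (k < d)%nat -> (l < d)%nat ->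
  Ccv (fun n => inner d (U n k) (U n l)) (inner d (us k) (us l)).
Proof.
  intros HU Hk Hl. apply Ccv_csum. intros i Hi. apply Ccv_mul; [apply Ccv_conj|]; apply HU; auto.
Qed.

Lemma basis_cv_meas_distr d U us A k : basis_cv d U us -> (k < d)%nat ->
  Un_cv (fun n => meas_distr d A (U n) k) (meas_distr d A us k).
Proof.
  intros HU Hk. apply Ccv_csum. intros i Hi.
  apply Ccv_mul; [apply Ccv_conj, HU; auto|].
  apply Ccv_csum. intros j Hj. apply Ccv_mul; [apply Ccv_const|apply HU; auto].
Qed.

Lemma orthonormal_coord_bound d u k i : orthonormal d u -> (k < d)%nat -> (i < d)%nat ->
  Rabs (fst (u k i)) <= 1 /\ Rabs (snd (u k i)) <= 1.
Proof.
  intros Hu Hk Hi.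
  assert (Hf : fst (inner d (u k) (u k)) = 1) by (rewrite orthonormal_unit; auto).
  unfold inner in Hf. rewrite fst_csum in Hf.
  assert (H : fst (Cmul (Cconj (u k i)) (u k i)) <= 1).
  { rewrite <- Hf. apply (rsum_ge_term d (fun i => fst (Cmul (Cconj (u k i)) (u k i)))); auto.
    intros; rewrite fst_conj_mul; nra. }
  rewrite fst_conj_mul in H. split; apply Rabs_le; nra.
Qed.

Definition coord (j : nat * nat * bool) (u : nat -> Vec) : R :=
  let '(k, i, re) := j in if re then fst (u k i) else snd (u k i).

Definition coord_indices (d : nat) : list (nat * nat * bool) :=
  list_prod (list_prod (seq 0 d) (seq 0 d)) (true :: false :: nil).

Lemma in_coord_indices d k i re :
  In (k, i, re) (coord_indices d) <-> (k < d)%nat /\ (i < d)%nat.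
Proof.
  unfold coord_indices. rewrite !in_prod_iff, !in_seq.
  split; [lia|]. intros. repeat split; try lia. destruct re; simpl; auto.
Qed.

Lemma orthonormal_seq_cluster d U : (forall n, orthonormal d (U n)) ->
  exists phi us, incr phi /\ orthonormal d us /\ basis_cv d (fun n => U (phi n)) us.
Proof.
  intros HU.
  destruct (bounded_subseq_cv_list coord (coord_indices d) U 1) as [phi [Hphi Hcv]].
  { intros [[k i] re] n Hin. apply in_coord_indices in Hin as [Hk Hi].
    destruct (orthonormal_coord_bound d (U n) k i (HU n) Hk Hi). destruct re; auto. }
  destruct (choice (fun j l => In j (coord_indices d) -> Un_cv (fun n => coord j (U (phi n))) l))
    as [lim Hlim].
  { intros j. destruct (classic (In j (coord_indices d))) as [Hin|Hin].
    - destruct (Hcv j Hin) as [l Hl]. exists l; auto.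
    - exists 0. contradiction. }
  set (us := fun k i => (lim (k, i, true), lim (k, i, false))).
  assert (Hus : basis_cv d (fun n => U (phi n)) us).
  { intros k i Hk Hi.
    split; [apply (Hlim (k, i, true))|apply (Hlim (k, i, false))]; apply in_coord_indices; auto. }
  exists phi, us. split; [exact Hphi|split; [|exact Hus]].
  intros k l Hk Hl. apply (Ccv_unique (fun n => inner d (U (phi n) k) (U (phi n) l))).
  - apply (basis_cv_inner d (fun n => U (phi n))); auto.
  - apply (Ccv_ext (fun _ => if Nat.eq_dec k l then C1 else C0)); [|apply Ccv_const].
    intros n. symmetry. apply HU; auto.
Qed.

Lemma meas_distr_pos d A u k : pd d A -> orthonormal d u -> (k < d)%nat -> 0 < meas_distr d A u k.
Proof.
  intros [_ HA] Hu Hk. apply HA, unit_vector_nonzero, orthonormal_unit; auto.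
Qed.

Lemma std_basis_orthonormal d : orthonormal d kron.
Proof.
  intros k l Hk Hl. unfold inner.
  rewrite (csum_ext d _ (fun i => Cmul (kron i k) (kron l i))), csum_kron by
    (auto; intros i Hi; rewrite Cconj_kron, kron_sym; ring).
  unfold kron. destruct (Nat.eq_dec l k), (Nat.eq_dec k l); congruence.
Qed.

Definition pd_rel_entropy (d : nat) (rho sigma : Mat) (u : nat -> Vec) : R :=
  rsum d (fun k => meas_distr d rho u k *
                   (ln (meas_distr d rho u k) - ln (meas_distr d sigma u k))).

Section PositiveDefinite.
Variables (d : nat) (rho sigma : Mat).
Hypotheses (Hrho : pd d rho) (Hsigma : pd d sigma).

Lemma basis_rel_entropy_pd u : orthonormal d u ->
  basis_rel_entropy d rho sigma u = Fin (pd_rel_entropy d rho sigma u).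
Proof.
  intros Hu. apply Esum_fin. intros k Hk.
  pose proof (meas_distr_pos d rho u k Hrho Hu Hk).
  pose proof (meas_distr_pos d sigma u k Hsigma Hu Hk).
  unfold rel_term. destruct Req_EM_T; [lra|]. destruct Req_EM_T; [lra|].
  rewrite ln_div; auto.
Qed.

Lemma pd_rel_entropy_cv U us : orthonormal d us -> basis_cv d U us ->
  Un_cv (fun n => pd_rel_entropy d rho sigma (U n)) (pd_rel_entropy d rho sigma us).
Proof.
  intros Hus HU. apply Un_cv_rsum. intros k Hk.
  apply CV_mult; [apply basis_cv_meas_distr; auto|].
  apply CV_minus; apply Un_cv_ln; try apply meas_distr_pos; auto; apply basis_cv_meas_distr; auto.
Qed.

Lemma DP_sup_attained v : is_lub_E (DP_set d rho sigma) v ->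
  exists u, orthonormal d u /\ basis_rel_entropy d rho sigma u = v.
Proof.
  intros Hv.
  assert (HS : forall y, DP_set d rho sigma y ->
               exists u, orthonormal d u /\ y = Fin (pd_rel_entropy d rho sigma u)).
  { intros y Hy. apply DP_set_basis in Hy as [u [Hu ->]].
    exists u. split; auto. apply basis_rel_entropy_pd; auto. }
  assert (Hnm : v <> MInf).
  { intros ->. assert (Hmem : DP_set d rho sigma (basis_rel_entropy d rho sigma kron))
      by (apply DP_set_basis; exists kron; split; [apply std_basis_orthonormal|reflexivity]).
    pose proof (proj1 Hv _ Hmem) as Hle.
    rewrite basis_rel_entropy_pd in Hle by apply std_basis_orthonormal. exact Hle. }
  destruct (choice _ (lub_approx_exists _ _ _ v Hv Hnm HS)) as [U HU].
  destruct (orthonormal_seq_cluster d U (fun n => proj1 (HU n))) as [phi [us [Hphi [Hus Hcv]]]].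
  exists us. split; auto. rewrite basis_rel_entropy_pd by auto. symmetry.
  apply (lub_eq_subseq_limit v (fun n => pd_rel_entropy d rho sigma (U n)) phi); auto.
  - intros n. apply HU.
  - apply (pd_rel_entropy_cv (fun n => U (phi n))); auto.
  - rewrite <- basis_rel_entropy_pd by auto. apply Hv, DP_set_basis. eauto.
Qed.

Lemma ratio_attains u : density d rho -> orthonormal d u ->
  exists w L, pd d w /\ mat_log d w L /\
    Fin (var1 d rho sigma w L) = basis_rel_entropy d rho sigma u /\
    Fin (var2 d rho sigma w L) = basis_rel_entropy d rho sigma u.
Proof.
  intros Hr Hu.
  set (p := meas_distr d rho u). set (q := meas_distr d sigma u).
  set (lam := fun k => p k / q k).
  assert (Hp : forall k, (k < d)%nat -> 0 < p k) by (intros; apply meas_distr_pos; auto).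
  assert (Hq : forall k, (k < d)%nat -> 0 < q k) by (intros; apply meas_distr_pos; auto).
  assert (Hl : forall k, (k < d)%nat -> 0 < lam k) by (intros; apply Rdiv_lt_0_compat; auto).
  assert (HS : dot d lam q = 1).
  { rewrite <- (meas_distr_sum d rho u Hr Hu). apply rsum_ext; intros k Hk.
    unfold lam. fold p. field. apply Rgt_not_eq, Hq; auto. }
  assert (HD : basis_rel_entropy d rho sigma u = Fin (dot d (fun k => ln (lam k)) p)).
  { rewrite basis_rel_entropy_pd by auto. f_equal. apply rsum_ext; intros k Hk.
    unfold lam. rewrite ln_div by auto. fold p q. ring. }
  exists (spectral_sum d u lam), (spectral_sum d u (fun k => ln (lam k))).
  split; [apply spectral_pd; auto|split; [apply spectral_mat_log; auto|]].
  rewrite HD, (var1_spectral _ _ _ _ _ u lam), (var2_spectral _ _ _ _ _ u lam) by apply meq_refl.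
  fold p q.
  rewrite HS, ln_1. split; f_equal; ring.
Qed.

End PositiveDefinite.

Theorem lemma1 (d : nat) (rho sigma : Mat) :
  density d rho -> psd d sigma -> nonzero_mat d sigma ->
  exists v : ER,
    is_lub_E (DP_set d rho sigma) v /\
    is_lub_E (set1 d rho sigma) v /\
    is_lub_E (set2 d rho sigma) v /\
    (~ supp_incl d rho sigma -> v = PInf) /\
    (pd d rho -> pd d sigma ->
       (exists w L, pd d w /\ mat_log d w L /\ Fin (var1 d rho sigma w L) = v) /\
       (exists w L, pd d w /\ mat_log d w L /\ Fin (var2 d rho sigma w L) = v)).
Proof.
  intros Hr Hs _.
  destruct (lub_exists (DP_set d rho sigma)) as [v Hv].
  exists v. split; [exact Hv|]. split; [apply lub_set1; auto|]. split; [apply lub_set2; auto|].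
  split.
  - intros Hn. destruct (not_supp_incl_basis d rho sigma Hr Hs Hn) as [u [Hu Hinf]].
    apply Ele_PInf_l. rewrite <- Hinf. apply Hv, DP_set_basis. eauto.
  - intros Hrp Hsp.
    destruct (DP_sup_attained d rho sigma Hrp Hsp v Hv) as [u [Hu <-]].
    destruct (ratio_attains d rho sigma Hrp Hsp u Hr Hu) as [w [L [Hw [HL [E1 E2]]]]].
    split; exists w, L; auto.
Qed.
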